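(* Suppose $f$ is twice differentiable at every point of $\mathbb{R}^{n\times p}$, and let $X\in\mathcal{S}_{n,p}$ be a first-order stationary point of (OCP). Then every eigenvalue of $\mathrm{hess} f(X)$ is an eigenvalue of $\nabla^2h(X)$; conversely, every eigenvalue of $\nabla^2h(X)$ is either an eigenvalue of $\mathrm{hess} f(X)$ or is at least $2\beta-M_2$.
   Context: $f:\mathbb{R}^{n\times p}\to\mathbb{R}$ ($n\ge p$) is differentiable with $f,\nabla f$ locally Lipschitz. (OCP): $\min f(X)$ s.t. $X^\top X=I_p$; $\mathcal{S}_{n,p}=\{X:X^\top X=I_p\}$. $\langle A,B\rangle=\mathrm{tr}(A^\top B)$, $\Phi(M):=\frac12(M+M^\top)$. For $X\in\mathcal{S}_{n,p}$, $\mathcal{T}_X:=\{D:\Phi(D^\top X)=0\}$ and $\mathcal{P}_{\mathcal{T}_X}(W):=W-X\Phi(X^\top W)$ is the orthogonal projection onto $\mathcal{T}_X$. $X\in\mathcal{S}_{n,p}$ is a first-order stationary point of (OCP) if $\nabla f(X)-X\Phi(X^\top\nabla f(X))=0$. The Riemannian Hessian $\mathrm{hess} f(X):\mathcal{T}_X\to\mathcal{T}_X$ is $\mathrm{hess} f(X)[D]:=\mathcal{P}_{\mathcal{T}_X}\big(\nabla^2f(X)[D]-D\Phi(X^\top\nabla f(X))\big)$, so that $\langle D_1,\mathrm{hess} f(X)[D_2]\rangle=\langle D_1,\nabla^2f(X)[D_2]-D_2\Phi(X^\top\nabla f(X))\rangle$ for $D_1,D_2\in\mathcal{T}_X$. $\mathcal{A}(X):=\frac32I_p-\frac12X^\top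 X$, $g(X):=f(X\mathcal{A}(X))$, $h(X):=g(X)+\frac\beta4\|X^\top X-I_p\|_F^2$ with $\beta>0$; $\nabla^2h(X)$ is viewed as a linear operator on $\mathbb{R}^{n\times p}$. $\Omega:=\{X:\|X\|_2\le1+\frac1{12}\}$, $M_2:=\sup_{X\ne Y\in\Omega}\frac{\|\nabla g(X)-\nabla g(Y)\|_F}{\|X-Y\|_F}$. *)

From HB Require Import structures.
From mathcomp Require Import all_boot all_order all_algebra.
From mathcomp Require Import all_classical all_reals all_analysis.
Set Implicit Arguments. Unset Strict Implicit. Unset Printing Implicit Defensive.
Import Order.TTheory GRing.Theory Num.Theory.
Import numFieldNormedType.Exports.
Local Open Scope classical_set_scope.
Local Open Scope ring_scope.

Section Defs.
Variables (R : realType) (n p : nat).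

Definition frob_inner {m k : nat} (A B : 'M[R]_(m, k)) : R := \tr (A^T *m B).
Definition frob {m k : nat} (A : 'M[R]_(m, k)) : R :=
  Num.sqrt (\sum_i \sum_j A i j ^+ 2).

Definition opnorm2 {m k : nat} (A : 'M[R]_(m, k)) : R :=
  sup [set frob (A *m v) | v in [set v : 'cV[R]_k | frob v <= 1]].

Definition Phi {k : nat} (M : 'M[R]_k) : 'M[R]_k := 2^-1 *: (M + M^T).

(* Euclidean gradient w.r.t. the Frobenius inner product:
   <grad F X, D> = 'd F X D, i.e. (grad F X)_{ij} = dF(X)[E_ij] *)
Definition grad (F : 'M[R]_(n, p) -> R) (X : 'M[R]_(n, p)) : 'M[R]_(n, p) :=
  \matrix_(i, j) ('d F X (delta_mx i j : 'M[R]_(n, p))).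

Definition ehess (F : 'M[R]_(n, p) -> R) (X D : 'M[R]_(n, p)) : 'M[R]_(n, p) :=
  'd (grad F) X D.

Definition twice_differentiable (F : 'M[R]_(n, p) -> R) (X : 'M[R]_(n, p)) :=
  differentiable F X /\ differentiable (grad F) X.

Definition stiefel (X : 'M[R]_(n, p)) : Prop := X^T *m X = 1%:M.

Definition tangent (X D : 'M[R]_(n, p)) : Prop := Phi (D^T *m X) = 0.

Definition Ptan (X W : 'M[R]_(n, p)) : 'M[R]_(n, p) := W - X *m Phi (X^T *m W).

Definition first_order_stationary (F : 'M[R]_(n, p) -> R) (X : 'M[R]_(n, p)) :=
  stiefel X /\ grad F X - X *m Phi (X^T *m grad F X) = 0.

Definition rhess (F : 'M[R]_(n, p) -> R) (X D : 'M[R]_(n, p)) : 'M[R]_(n, p) :=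
  Ptan X (ehess F X D - D *m Phi (X^T *m grad F X)).

Definition rhess_eigenvalue (F : 'M[R]_(n, p) -> R) (X : 'M[R]_(n, p)) (l : R) :=
  exists D : 'M[R]_(n, p), [/\ tangent X D, D != 0 & rhess F X D = l *: D].

Definition ehess_eigenvalue (F : 'M[R]_(n, p) -> R) (X : 'M[R]_(n, p)) (l : R) :=
  exists D : 'M[R]_(n, p), D != 0 /\ ehess F X D = l *: D.

Definition Amap (X : 'M[R]_(n, p)) : 'M[R]_p :=
  (3 / 2) *: 1%:M - 2^-1 *: (X^T *m X).

Definition gfun (f : 'M[R]_(n, p) -> R) (X : 'M[R]_(n, p)) : R :=
  f (X *m Amap X).

Definition hfun (f : 'M[R]_(n, p) -> R) (beta : R) (X : 'M[R]_(n, p)) : R :=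
  gfun f X + beta / 4 * frob (X^T *m X - 1%:M) ^+ 2.

Definition Omega : set 'M[R]_(n, p) :=
  [set X | opnorm2 X <= 1 + 12^-1].

Definition M2 (f : 'M[R]_(n, p) -> R) : \bar R :=
  ereal_sup [set (frob (grad (gfun f) XY.1 - grad (gfun f) XY.2) / frob (XY.1 - XY.2))%:E
            | XY in [set XY : 'M[R]_(n, p) * 'M[R]_(n, p) |
                     [/\ Omega XY.1, Omega XY.2 & XY.1 != XY.2]]
            ].

Definition loc_lipschitz_R (F : 'M[R]_(n, p) -> R) : Prop :=
  forall X, exists r L : R, 0 < r /\
    forall Y Z, frob (Y - X) < r -> frob (Z - X) < r ->
      `|F Y - F Z| <= L * frob (Y - Z).

Definition loc_lipschitz_M (F : 'M[R]_(n, p) -> 'M[R]_(n, p)) : Prop :=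
  forall X, exists r L : R, 0 < r /\
    forall Y Z, frob (Y - X) < r -> frob (Z - X) < r ->
      frob (F Y - F Z) <= L * frob (Y - Z).

End Defs.

(* At a stationary point X we have grad f(X) = X L with L symmetric, and every
   direction splits as D = P_T(D) + X S with S = Phi(X^T D) symmetric. Along
   tangent directions A(X) = I, its derivative and the penalty Hessian vanish,
   so Hess h(X) acts on T_X as hess f(X); on normal directions it maps X S to
   X (-(3/2)(L S + S L) + 2 beta S), again a normal direction. Hence Hess h(X)
   is block diagonal: eigenvectors of hess f(X) are eigenvectors of Hess h(X),
   and an eigenvector of Hess h(X) either has a nonzero tangent part, which is
   an eigenvector of hess f(X), or is normal, D = X S. In the normal case
   l |S|^2 = <X S, Hess g(X)[X S]> + 2 beta |S|^2, and the first term is at least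
   -M_2 |S|^2 because Omega contains a neighbourhood of X and M_2 bounds the
   difference quotients of grad g on Omega. *)

From HB Require Import structures.
From mathcomp Require Import all_boot all_order all_algebra.
From mathcomp Require Import all_classical all_reals all_analysis.
From mathcomp Require Import ring lra.
Import Order.TTheory GRing.Theory Num.Theory.
Import numFieldNormedType.Exports.
Local Open Scope classical_set_scope.
Local Open Scope ring_scope.
Set Implicit Arguments. Unset Strict Implicit. Unset Printing Implicit Defensive.

Section MatrixCalculus.
Variables (R : realType) (V : normedModType R).

Lemma is_diff_sum (W : normedModType R) (I : Type) (r : seq I)
    (F dF : I -> V -> W) x :
  (forall i, is_diff x (F i) (dF i)) ->
  is_diff x (fun y => \sum_(i <- r) F i y) (fun v => \sum_(i <- r) dF i v).
Proof.
move=> dFi; elim: r => [|a r IH].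
  under eq_fun do rewrite big_nil.
  by apply: is_diff_eq (is_diff_cst 0 x) _; apply/funext => v; rewrite big_nil.
under eq_fun do rewrite big_cons.
by apply: is_diff_eq (is_diffD (dFi a) IH) _; apply/funext => v; rewrite big_cons.
Qed.

Lemma is_diffZl (W : normedModType R) (k dk : V -> R) (c : W) x :
  is_diff x k dk -> is_diff x (fun y => k y *: c) (fun v => dk v *: c).
Proof.
move=> [dkx dkE]; apply: DiffDef; first exact: differentiableZl.
by rewrite diffZl // dkE.
Qed.

Lemma is_diff_entry m k (F dF : V -> 'M[R]_(m, k)) x i j :
  is_diff x F dF -> is_diff x (fun y => F y i j) (fun v => dF v i j).
Proof.
move=> dFx; pose entry := fun A : 'M[R]_(m, k) => A i j.
have entry_linear : linear entry by move=> a A B; rewrite /entry !mxE.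
pose lentry : {linear 'M[R]_(m, k) -> R} :=
  HB.pack entry (GRing.isLinear.Build _ _ _ _ entry entry_linear).
have dentry z : is_diff z lentry lentry.
  apply: DiffDef; first exact/linear_differentiable/coord_continuous.
  by rewrite diff_lin //; exact: coord_continuous.
exact: (is_diff_comp dFx (dentry (F x))).
Qed.

Lemma is_diff_matrix m k (F dF : V -> 'M[R]_(m, k)) x :
  (forall i j, is_diff x (fun y => F y i j) (fun v => dF v i j)) ->
  is_diff x F dF.
Proof.
move=> dFij; have -> : F = fun y => \sum_i \sum_j F y i j *: delta_mx i j.
  by apply/funext => y; rewrite [LHS]matrix_sum_delta.
apply: is_diff_eq; last by apply/funext => v; rewrite [RHS]matrix_sum_delta.
by do 2!apply: is_diff_sum => ?; exact: is_diffZl.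
Qed.

Lemma is_diff_mulmx a b c (F dF : V -> 'M[R]_(a, b)) (G dG : V -> 'M[R]_(b, c)) x :
  is_diff x F dF -> is_diff x G dG ->
  is_diff x (fun y => F y *m G y) (fun v => dF v *m G x + F x *m dG v).
Proof.
move=> dFx dGx; apply: is_diff_matrix => i j.
have -> : (fun y => (F y *m G y) i j) = fun y => \sum_l F y i l * G y l j.
  by apply/funext => y; rewrite mxE.
apply: is_diff_eq.
  apply: is_diff_sum => l.
  exact: (is_diffM (is_diff_entry i l dFx) (is_diff_entry l j dGx)).
apply/funext => v /=; rewrite !mxE -big_split; apply: eq_bigr => l _ /=.
by rewrite !fctE addrC; congr (_ + _); exact: mulrC.
Qed.

Lemma is_diff_trmx m k (F dF : V -> 'M[R]_(m, k)) x :
  is_diff x F dF -> is_diff x (fun y => (F y)^T) (fun v => (dF v)^T).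
Proof.
move=> dFx; apply: is_diff_matrix => i j.
have -> : (fun y => (F y)^T i j) = fun y => F y j i by apply/funext => y; rewrite mxE.
by apply: is_diff_eq (is_diff_entry j i dFx) _; apply/funext => v; rewrite mxE.
Qed.

Lemma is_diff_mxtrace m (F dF : V -> 'M[R]_m) x :
  is_diff x F dF -> is_diff x (fun y => \tr (F y)) (fun v => \tr (dF v)).
Proof. by move=> dFx; apply: is_diff_sum => i; exact: is_diff_entry. Qed.

End MatrixCalculus.

Lemma quadratic_ge0_discr (R : realFieldType) (a b c : R) :
  0 <= a -> (forall t, 0 <= a * t ^+ 2 + 2 * b * t + c) -> b ^+ 2 <= a * c.
Proof.
move=> a_ge0 q_ge0; have [a0|a_neq0] := eqVneq a 0.
  have [->|b_neq0] := eqVneq b 0; first by rewrite expr0n a0 mul0r.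
  have t_root : 2 * b * (- (c + 1) / (2 * b)) = - (c + 1) by field.
  by have := q_ge0 (- (c + 1) / (2 * b)); rewrite a0 t_root; lra.
have a_gt0 : 0 < a by rewrite lt_def a_neq0.
have t_min : (- b / a) * a = - b by rewrite divfK.
by have := q_ge0 (- b / a); move: (- b / a) t_min => t; nra.
Qed.

Section Frobenius.
Variable R : realType.

Lemma frob_innerE m k (A B : 'M[R]_(m, k)) :
  frob_inner A B = \sum_i \sum_j A i j * B i j.
Proof.
rewrite /frob_inner /mxtrace exchange_big; apply: eq_bigr => j _.
by rewrite mxE; apply: eq_bigr => i _; rewrite mxE.
Qed.

Lemma frob_inner_delta m k (A : 'M[R]_(m, k)) i j :
  frob_inner A (delta_mx i j) = A i j.
Proof.
rewrite frob_innerE (bigD1 i) //= (bigD1 j) //= mxE !eqxx mulr1.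
rewrite big1 => [|l lj]; last by rewrite mxE eqxx (negbTE lj) mulr0.
rewrite big1 ?addr0 // => l li.
by rewrite big1 // => r _; rewrite mxE (negbTE li) mulr0.
Qed.

Lemma frob_innerC m k (A B : 'M[R]_(m, k)) : frob_inner A B = frob_inner B A.
Proof. by rewrite !frob_innerE; do 2!apply: eq_bigr => ? _; rewrite mulrC. Qed.

Lemma frob_innerDr m k (A B C : 'M[R]_(m, k)) :
  frob_inner A (B + C) = frob_inner A B + frob_inner A C.
Proof. by rewrite /frob_inner mulmxDr mxtraceD. Qed.

Lemma frob_innerZr m k (A B : 'M[R]_(m, k)) a :
  frob_inner A (a *: B) = a * frob_inner A B.
Proof. by rewrite /frob_inner -scalemxAr mxtraceZ. Qed.

Lemma frob_innerNr m k (A B : 'M[R]_(m, k)) :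
  frob_inner A (- B) = - frob_inner A B.
Proof. by rewrite /frob_inner mulmxN linearN. Qed.

Lemma frob_innerBr m k (A B C : 'M[R]_(m, k)) :
  frob_inner A (B - C) = frob_inner A B - frob_inner A C.
Proof. by rewrite /frob_inner mulmxBr linearB. Qed.

Lemma frob_innerDl m k (A B C : 'M[R]_(m, k)) :
  frob_inner (B + C) A = frob_inner B A + frob_inner C A.
Proof. by rewrite frob_innerC frob_innerDr !(frob_innerC A). Qed.

Lemma frob_innerZl m k (A B : 'M[R]_(m, k)) a :
  frob_inner (a *: B) A = a * frob_inner B A.
Proof. by rewrite frob_innerC frob_innerZr frob_innerC. Qed.

Lemma frob_innerBl m k (A B C : 'M[R]_(m, k)) :
  frob_inner (B - C) A = frob_inner B A - frob_inner C A.
Proof. by rewrite frob_innerC frob_innerBr !(frob_innerC A). Qed.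

Lemma frob_inner_mulmxr m k l (A : 'M[R]_(m, k)) (B : 'M[R]_(m, l)) C :
  frob_inner A (B *m C) = frob_inner (B^T *m A) C.
Proof. by rewrite /frob_inner trmx_mul trmxK mulmxA. Qed.

Lemma frob_inner_mulmxl m k l (A : 'M[R]_(m, k)) (B : 'M[R]_(m, l)) C :
  frob_inner A (B *m C) = frob_inner (A *m C^T) B.
Proof. by rewrite /frob_inner trmx_mul trmxK mulmxA mxtrace_mulC mulmxA. Qed.

Lemma frob_inner_tr m k (A B : 'M[R]_(m, k)) :
  frob_inner A^T B^T = frob_inner A B.
Proof. by rewrite /frob_inner trmxK -mxtrace_tr trmx_mul trmxK mxtrace_mulC. Qed.

Lemma frob_inner_ge0 m k (A : 'M[R]_(m, k)) : 0 <= frob_inner A A.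
Proof.
by rewrite frob_innerE; do 2!apply: sumr_ge0 => ? _; rewrite -expr2 sqr_ge0.
Qed.

Lemma frobE m k (A : 'M[R]_(m, k)) : frob A = Num.sqrt (frob_inner A A).
Proof.
by rewrite /frob frob_innerE; congr Num.sqrt; do 2!apply: eq_bigr => ? _.
Qed.

Lemma frob_sqr m k (A : 'M[R]_(m, k)) : frob A ^+ 2 = frob_inner A A.
Proof. by rewrite frobE sqr_sqrtr // frob_inner_ge0. Qed.

Lemma frob_ge0 m k (A : 'M[R]_(m, k)) : 0 <= frob A.
Proof. exact: sqrtr_ge0. Qed.

Lemma frob_inner_eq0 m k (A : 'M[R]_(m, k)) : (frob_inner A A == 0) = (A == 0).
Proof.
apply/idP/eqP => [|->]; last by rewrite /frob_inner mulmx0 mxtrace0.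
rewrite frob_innerE psumr_eq0 => [/allP sum0|i _]; last first.
  by apply: sumr_ge0 => j _; rewrite -expr2 sqr_ge0.
apply/matrixP => i j; move/implyP: (sum0 i (mem_index_enum _)) => /(_ isT).
rewrite psumr_eq0 => [/allP/(_ j (mem_index_enum _))|l _]; last first.
  by rewrite -expr2 sqr_ge0.
by rewrite -expr2 sqrf_eq0 mxE => /eqP.
Qed.

Lemma frob_inner_gt0 m k (A : 'M[R]_(m, k)) : A != 0 -> 0 < frob_inner A A.
Proof. by rewrite lt_def frob_inner_eq0 frob_inner_ge0 andbT. Qed.

Lemma frob_eq0 m k (A : 'M[R]_(m, k)) : (frob A == 0) = (A == 0).
Proof. by rewrite frobE sqrtr_eq0 le_eqVlt ltNge frob_inner_ge0 orbF frob_inner_eq0. Qed.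

Lemma frobZ m k (A : 'M[R]_(m, k)) a : frob (a *: A) = `|a| * frob A.
Proof. by rewrite !frobE frob_innerZl frob_innerZr mulrA -expr2 sqrtrM ?sqr_ge0 // sqrtr_sqr. Qed.

Lemma frob_inner_expand m k (A B : 'M[R]_(m, k)) :
  frob_inner (A + B) (A + B) = frob_inner A A + 2 * frob_inner A B + frob_inner B B.
Proof. by rewrite frob_innerDl !frob_innerDr (frob_innerC B A); ring. Qed.

Lemma frob_inner_sqr_le m k (A B : 'M[R]_(m, k)) :
  frob_inner A B ^+ 2 <= frob_inner A A * frob_inner B B.
Proof.
apply: quadratic_ge0_discr (frob_inner_ge0 A) _ => t.
have := frob_inner_ge0 (t *: A + B).
by rewrite frob_inner_expand !frob_innerZl frob_innerZr; lra.
Qed.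

Lemma frob_inner_CS m k (A B : 'M[R]_(m, k)) : `|frob_inner A B| <= frob A * frob B.
Proof.
rewrite !frobE -sqrtrM ?frob_inner_ge0 // -sqrtr_sqr.
by rewrite ler_sqrt ?frob_inner_sqr_le // mulr_ge0 ?frob_inner_ge0.
Qed.

Lemma frobD_le m k (A B : 'M[R]_(m, k)) : frob (A + B) <= frob A + frob B.
Proof.
rewrite -(ler_pXn2r (_ : 0 < 2)%N) ?nnegrE ?addr_ge0 ?frob_ge0 //.
rewrite frob_sqr frob_inner_expand sqrrD !frob_sqr -mulr_natr.
by have := frob_inner_CS A B; have := ler_norm (frob_inner A B); lra.
Qed.

Lemma frob_mulmx_le m k l (A : 'M[R]_(m, k)) (B : 'M[R]_(k, l)) :
  frob (A *m B) <= frob A * frob B.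
Proof.
rewrite !frobE -sqrtrM ?frob_inner_ge0 // ler_sqrt ?mulr_ge0 ?frob_inner_ge0 //.
have rowsE : frob_inner A A = \sum_i frob_inner (row i A) (row i A).
  by rewrite frob_innerE; apply: eq_bigr => i _; rewrite frob_innerE big_ord1;
     apply: eq_bigr => j _; rewrite !mxE.
have colsE : frob_inner B B = \sum_j frob_inner (col j B) (col j B).
  rewrite frob_innerE exchange_big; apply: eq_bigr => j _; rewrite frob_innerE.
  by apply: eq_bigr => i _; rewrite big_ord1 !mxE.
rewrite rowsE colsE mulr_suml frob_innerE; apply: ler_sum => i _.
rewrite mulr_sumr; apply: ler_sum => j _.
have -> : (A *m B) i j = frob_inner (row i A)^T (col j B).
  by rewrite mxE frob_innerE; apply: eq_bigr => r _; rewrite big_ord1 !mxE.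
by rewrite -expr2 -(frob_inner_tr (row i A)); apply: frob_inner_sqr_le.
Qed.

End Frobenius.

Section DirectionalBound.
Variables (R : realType) (m k : nat).
Local Notation MM := 'M[R]_(m, k).

Lemma frob_inner_quotient_ge (E B : MM) h c :
  h != 0 -> frob B <= c * frob (h *: E) -> - c * frob_inner E E <= h^-1 * frob_inner E B.
Proof.
rewrite frobZ -frob_sqr mulNr => h_neq0 Ble; apply: lerNnormlW.
rewrite normrM normfV mulrC ler_pdivrMr ?normr_gt0 //.
have := frob_inner_CS E B; have := frob_ge0 E; have := normr_ge0 h; nra.
Qed.

Lemma diff_frob_inner_ge (G : MM -> MM) X E c d :
  differentiable G X -> 0 < d ->
  (forall h, h != 0 -> `|h| < d -> frob (G (h *: E + X) - G X) <= c * frob (h *: E)) ->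
  - c * frob_inner E E <= frob_inner E ('d G X E).
Proof.
move=> dG d_gt0 slope.
have dEG : is_diff X (fun Y => frob_inner E (G Y)) (fun v => frob_inner E ('d G X v)).
  have dGX : is_diff X G ('d G X) by apply: DiffDef.
  rewrite /frob_inner; apply: is_diff_eq.
    exact: is_diff_mxtrace (is_diff_mulmx (is_diff_cst E^T X) dGX).
  by apply/funext => v; rewrite /= mul0mx add0r.
have [dEGX dEGE] := dEG.
have -> : frob_inner E ('d G X E) = 'D_E (fun Y => frob_inner E (G Y)) X.
  by rewrite deriveE // dEGE.
apply: limr_ge; first exact: diff_derivable.
near=> h; rewrite /= -frob_innerBr.
apply: frob_inner_quotient_ge; first by near: h; exact: nbhs_dnbhs_neq.
by apply: slope; [near: h; exact: nbhs_dnbhs_neq | near: h; exact: dnbhs0_lt].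
Unshelve. all: by end_near.
Qed.

End DirectionalBound.

Section Symmetrization.
Variables (R : realType) (k : nat).
Implicit Types A B : 'M[R]_k.

Lemma trmx_Phi A : (Phi A)^T = Phi A.
Proof. by rewrite /Phi linearZ /= linearD /= trmxK addrC. Qed.

Lemma Phi_trmx A : Phi A^T = Phi A.
Proof. by rewrite /Phi trmxK addrC. Qed.

Lemma PhiD A B : Phi (A + B) = Phi A + Phi B.
Proof. by rewrite /Phi [(A + B)^T]linearD /= addrACA scalerDr. Qed.

Lemma PhiB A B : Phi (A - B) = Phi A - Phi B.
Proof. by rewrite /Phi [(A - B)^T]linearB /= addrACA -opprD scalerBr. Qed.

Lemma PhiZ a A : Phi (a *: A) = a *: Phi A.
Proof. by rewrite /Phi linearZ /= -scalerDr !scalerA mulrC. Qed.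

Lemma Phi_id A : A^T = A -> Phi A = A.
Proof.
move=> symA; rewrite /Phi symA -mulr2n -scalerMnr scalerMnl -mulr_natr.
by rewrite mulVf ?scale1r ?pnatr_eq0.
Qed.

Lemma PhiK A : Phi (Phi A) = Phi A.
Proof. exact/Phi_id/trmx_Phi. Qed.

Lemma Phi_eq0 A : Phi A = 0 -> A^T = - A.
Proof.
rewrite /Phi => /eqP; rewrite scaler_eq0 invr_eq0 pnatr_eq0 /= => /eqP sum0.
by rewrite -(addKr A A^T) sum0 addr0.
Qed.

End Symmetrization.

Section TangentProjection.
Variables (R : realType) (n p : nat).
Local Notation MM := 'M[R]_(n, p).
Variable X : MM.
Hypothesis stX : stiefel X.

Lemma PtanD (A B : MM) : Ptan X (A + B) = Ptan X A + Ptan X B.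
Proof. by rewrite /Ptan mulmxDr PhiD mulmxDr opprD addrACA. Qed.

Lemma PtanZ a (A : MM) : Ptan X (a *: A) = a *: Ptan X A.
Proof. by rewrite /Ptan -(scalemxAr a X^T A) PhiZ -scalemxAr scalerBr. Qed.

Lemma mulmx_tr_Ptan (W : MM) : X^T *m Ptan X W = X^T *m W - Phi (X^T *m W).
Proof. by rewrite /Ptan mulmxBr mulmxA stX mul1mx. Qed.

Lemma Ptan_id (W : MM) : Ptan X (Ptan X W) = Ptan X W.
Proof. by rewrite {1}/Ptan mulmx_tr_Ptan PhiB PhiK subrr mulmx0 subr0. Qed.

Lemma Ptan_normal (N : 'M[R]_p) : N^T = N -> Ptan X (X *m N) = 0.
Proof. by move=> symN; rewrite /Ptan mulmxA stX mul1mx Phi_id // subrr. Qed.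

Lemma tangent_Ptan (W : MM) : tangent X (Ptan X W).
Proof.
rewrite /tangent -[_ *m X]trmxK trmx_mul trmxK Phi_trmx mulmx_tr_Ptan.
by rewrite PhiB PhiK subrr.
Qed.

Lemma Ptan_normal_decomp (W : MM) : W = Ptan X W + X *m Phi (X^T *m W).
Proof. by rewrite /Ptan subrK. Qed.

Lemma Ptan_rhess (f : MM -> R) (D : MM) : Ptan X (rhess f X D) = rhess f X D.
Proof. exact: Ptan_id. Qed.

End TangentProjection.

Section Objective.
Variables (R : realType) (n p : nat).
Local Notation MM := 'M[R]_(n, p).
Implicit Types (Y E G : MM) (f : MM -> R).

Definition XAmap Y : MM := Y *m Amap Y.
Definition dAmap Y E : 'M[R]_p := - (2^-1 *: (E^T *m Y + Y^T *m E)).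
Definition dXAmap Y E : MM := E *m Amap Y + Y *m dAmap Y E.
Definition dXAmap_adj Y G : MM :=
  G *m Amap Y - 2^-1 *: (Y *m G^T *m Y + Y *m Y^T *m G).
Definition gram_defect Y : 'M[R]_p := Y^T *m Y - 1%:M.

Lemma trmx_Amap Y : (Amap Y)^T = Amap Y.
Proof. by rewrite /Amap linearB /= !linearZ /= tr_scalar_mx trmx_mul trmxK. Qed.

Lemma trmx_gram_defect Y : (gram_defect Y)^T = gram_defect Y.
Proof. by rewrite /gram_defect linearB /= tr_scalar_mx trmx_mul trmxK. Qed.

Lemma is_diff_gram Y :
  is_diff Y (fun y : MM => y^T *m y) (fun E => E^T *m Y + Y^T *m E).
Proof. exact: is_diff_mulmx (is_diff_trmx (is_diff_id Y)) (is_diff_id Y). Qed.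

Lemma is_diff_gram_defect Y :
  is_diff Y gram_defect (fun E => E^T *m Y + Y^T *m E).
Proof.
apply: is_diff_eq (is_diffB (is_diff_gram Y) (is_diff_cst 1%:M Y)) _.
by apply/funext => E; rewrite /= subr0.
Qed.

Lemma is_diff_Amap Y : is_diff Y (@Amap R n p) (dAmap Y).
Proof.
apply: is_diff_eq (is_diffB (is_diff_cst ((3 / 2) *: 1%:M) Y)
                            (is_diffZ 2^-1 (is_diff_gram Y))) _.
by apply/funext => E; rewrite /dAmap /= sub0r.
Qed.

Lemma is_diff_XAmap Y : is_diff Y XAmap (dXAmap Y).
Proof. exact: is_diff_mulmx (is_diff_id Y) (is_diff_Amap Y). Qed.

Lemma frob_inner_dXAmap Y G E :
  frob_inner G (dXAmap Y E) = frob_inner (dXAmap_adj Y G) E.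
Proof.
rewrite /dXAmap /dXAmap_adj /dAmap frob_innerDr frob_inner_mulmxl trmx_Amap.
rewrite frob_inner_mulmxr frob_innerNr frob_innerZr frob_innerDr.
rewrite frob_innerBl frob_innerZl frob_innerDl; congr (_ - _ * (_ + _)).
  by rewrite frob_inner_mulmxl -frob_inner_tr !trmx_mul !trmxK mulmxA.
by rewrite frob_inner_mulmxr trmxK mulmxA.
Qed.

Lemma grad_is_diff (F : MM -> R) Y G :
  is_diff Y F (frob_inner G) -> grad F Y = G.
Proof.
by case=> _ dFE; apply/matrixP => i j; rewrite /grad mxE dFE frob_inner_delta.
Qed.

Lemma diff_frob_inner_grad (F : MM -> R) Y E : 'd F Y E = frob_inner (grad F Y) E.
Proof.
rewrite {1}(matrix_sum_delta E) linear_sum frob_innerE; apply: eq_bigr => i _.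
rewrite linear_sum; apply: eq_bigr => j _.
by rewrite linearZ /= /grad mxE mulrC.
Qed.

Lemma Amap_stiefel (Y : MM) : stiefel Y -> Amap Y = 1%:M.
Proof.
by move=> stY; rewrite /Amap stY -scalerBl (_ : 3 / 2 - 2^-1 = 1) ?scale1r //; lra.
Qed.

Lemma XAmap_stiefel (Y : MM) : stiefel Y -> XAmap Y = Y.
Proof. by move=> stY; rewrite /XAmap Amap_stiefel // mulmx1. Qed.

Lemma gram_defect_stiefel (Y : MM) : stiefel Y -> gram_defect Y = 0.
Proof. by move=> stY; rewrite /gram_defect stY subrr. Qed.

Lemma tangent_skew (Y E : MM) : tangent Y E -> E^T *m Y = - (Y^T *m E).
Proof. by move=> /Phi_eq0; rewrite trmx_mul trmxK => ->; rewrite opprK. Qed.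

Lemma dAmap_tangent (Y E : MM) : tangent Y E -> dAmap Y E = 0.
Proof. by move=> /tangent_skew tE; rewrite /dAmap tE addNr scaler0 oppr0. Qed.

Lemma dXAmap_tangent (Y E : MM) : stiefel Y -> tangent Y E -> dXAmap Y E = E.
Proof.
by move=> stY tE; rewrite /dXAmap dAmap_tangent // Amap_stiefel // mulmx1 mulmx0 addr0.
Qed.

Section Gradients.
Variables (f : MM -> R) (beta : R).
Hypothesis f_diff : forall Z, differentiable f Z.

Lemma is_diff_gfun Y :
  is_diff Y (gfun f) (frob_inner (dXAmap_adj Y (grad f (XAmap Y)))).
Proof.
have df : is_diff (XAmap Y) f (frob_inner (grad f (XAmap Y))).
  by apply: DiffDef => //; apply/funext => E; exact: diff_frob_inner_grad.
apply: is_diff_eq (is_diff_comp (is_diff_XAmap Y) df) _.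
by apply/funext => E /=; rewrite frob_inner_dXAmap.
Qed.

Lemma is_diff_penalty Y :
  is_diff Y (fun y : MM => beta / 4 * frob (y^T *m y - 1%:M) ^+ 2)
            (frob_inner (beta *: (Y *m gram_defect Y))).
Proof.
have -> : (fun y : MM => beta / 4 * frob (y^T *m y - 1%:M) ^+ 2) =
          (fun y => (beta / 4) *: \tr ((gram_defect y)^T *m gram_defect y)).
  by apply/funext => y; rewrite frob_sqr.
have dQY := is_diff_gram_defect Y.
apply: is_diff_eq (is_diffZ _ (is_diff_mxtrace (is_diff_mulmx (is_diff_trmx dQY) dQY))) _.
apply/funext => E /=.
rewrite !fctE linearD /=.
set dQ := E^T *m Y + Y^T *m E; set Q := gram_defect Y.
rewrite -/(frob_inner dQ Q) -/(frob_inner Q dQ) (frob_innerC dQ).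
have QEtY : frob_inner Q (E^T *m Y) = frob_inner (Y *m Q) E.
  by rewrite frob_inner_mulmxl -frob_inner_tr trmx_mul !trmxK trmx_gram_defect.
have QYtE : frob_inner Q (Y^T *m E) = frob_inner (Y *m Q) E.
  by rewrite frob_inner_mulmxr trmxK.
rewrite frob_innerZl frob_innerDr QEtY QYtE.
by rewrite [LHS]/GRing.scale /=; field.
Qed.

Lemma grad_gfun : grad (gfun f) = fun Y => dXAmap_adj Y (grad f (XAmap Y)).
Proof. by apply/funext => Y; apply: grad_is_diff; exact: is_diff_gfun. Qed.

Lemma grad_hfun :
  grad (hfun f beta) = fun Y =>
    dXAmap_adj Y (grad f (XAmap Y)) + beta *: (Y *m gram_defect Y).
Proof.
apply/funext => Y; apply: grad_is_diff.
apply: is_diff_eq (is_diffD (is_diff_gfun Y) (is_diff_penalty Y)) _.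
by apply/funext => E; rewrite /= frob_innerDl.
Qed.

Definition dgrad_gfun X E : MM :=
  let G := grad f (XAmap X) in let H := ehess f (XAmap X) (dXAmap X E) in
  H *m Amap X + G *m dAmap X E
  - 2^-1 *: ((E *m G^T + X *m H^T) *m X + X *m G^T *m E
             + ((E *m X^T + X *m E^T) *m G + X *m X^T *m H)).

Definition dgrad_penalty X E : MM :=
  beta *: (E *m gram_defect X + X *m (E^T *m X + X^T *m E)).

Lemma is_diff_grad_gfun X : differentiable (grad f) (XAmap X) ->
  is_diff X (fun Y => dXAmap_adj Y (grad f (XAmap Y))) (dgrad_gfun X).
Proof.
move=> gradf_diff.
have dG : is_diff X (fun Y => grad f (XAmap Y)) (fun E => ehess f (XAmap X) (dXAmap X E)).
  have dgradf : is_diff (XAmap X) (grad f) (ehess f (XAmap X)) by apply: DiffDef.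
  exact: is_diff_comp (is_diff_XAmap X) dgradf.
have dX := is_diff_id X.
have dGA := is_diff_mulmx dG (is_diff_Amap X).
have dXGX := is_diff_mulmx (is_diff_mulmx dX (is_diff_trmx dG)) dX.
have dXXG := is_diff_mulmx (is_diff_mulmx dX (is_diff_trmx dX)) dG.
exact: is_diffB dGA (is_diffZ 2^-1 (is_diffD dXGX dXXG)).
Qed.

Lemma ehess_gfun X E : differentiable (grad f) (XAmap X) ->
  ehess (gfun f) X E = dgrad_gfun X E.
Proof. by move=> /is_diff_grad_gfun [_ dE]; rewrite /ehess grad_gfun dE. Qed.

Lemma ehess_hfun X E : differentiable (grad f) (XAmap X) ->
  ehess (hfun f beta) X E = dgrad_gfun X E + dgrad_penalty X E.
Proof.
move=> /is_diff_grad_gfun dgrad.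
have dpen := is_diffZ beta (is_diff_mulmx (is_diff_id X) (is_diff_gram_defect X)).
case: (is_diffD dgrad dpen) => _ dE; rewrite /ehess grad_hfun.
exact: (congr1 (fun d => d E) dE).
Qed.

End Gradients.
End Objective.

Lemma ereal_sup_image_lower (R : realType) (T : Type) (P : set T) (F : T -> R) (c l : R) :
  P !=set0 -> (forall u, (forall x, P x -> F x <= u) -> c - u <= l) ->
  (c%:E - ereal_sup [set (F x)%:E | x in P] <= l%:E)%E.
Proof.
move=> [x0 Px0] lower.
have ub x : P x -> ((F x)%:E <= ereal_sup [set (F x)%:E | x in P])%E.
  by move=> Px; apply: ereal_sup_ubound; exists x.
case: (ereal_sup _) ub => [u||] ub.
- rewrite -EFinB lee_fin; apply: lower => x Px.
  by rewrite -lee_fin; exact: ub.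
- by rewrite /= leNye.
- by have := ub x0 Px0; rewrite leeNy_eq.
Qed.

Section Omega.
Variables (R : realType) (n p : nat).
Local Notation MM := 'M[R]_(n, p).

Lemma frob_stiefel_mulmx k (X : MM) (v : 'M[R]_(p, k)) :
  stiefel X -> frob (X *m v) = frob v.
Proof. by move=> stX; rewrite !frobE frob_inner_mulmxr mulmxA stX mul1mx. Qed.

Lemma Omega_stiefel_nbhd (X E : MM) : stiefel X ->
  exists2 d : R, 0 < d & forall h, `|h| < d -> Omega (h *: E + X).
Proof.
move=> stX; have fE := frob_ge0 E.
exists (12 * (frob E + 1))^-1 => [|h]; first by rewrite invr_gt0; lra.
move=> small_h; have {}small_h : `|h| * (12 * (frob E + 1)) < 1.
  by rewrite -ltr_pdivlMr ?mul1r //; lra.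
apply: ge_sup.
  exists (frob ((h *: E + X) *m (0 : 'cV[R]_p))), 0 => //=.
  by rewrite frobE /frob_inner trmx0 mul0mx mxtrace0 sqrtr0 ler01.
move=> _ [v /= v_le1 <-]; rewrite mulmxDl -scalemxAl.
apply: le_trans (frobD_le _ _) _; rewrite frobZ (frob_stiefel_mulmx _ stX).
have Ev_le : frob (E *m v) <= frob E.
  by apply: le_trans (frob_mulmx_le E v) _; rewrite ler_piMr.
have := normr_ge0 h; nra.
Qed.

Lemma Omega_stiefel (X : MM) : stiefel X -> Omega X.
Proof.
move=> stX; have [d d_gt0 OmegaE] := Omega_stiefel_nbhd X stX.
by have := OmegaE 0; rewrite normr0 scale0r add0r; apply.
Qed.

Definition gfun_slope (f : MM -> R) (Y1 Y2 : MM) : R :=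
  frob (grad (gfun f) Y1 - grad (gfun f) Y2) / frob (Y1 - Y2).

Definition gfun_slope_ub (f : MM -> R) (c : R) : Prop :=
  forall Y1 Y2, Omega Y1 -> Omega Y2 -> Y1 != Y2 -> gfun_slope f Y1 Y2 <= c.

Lemma M2_lower_bound (f : MM -> R) (X E : MM) (c l : R) :
  stiefel X -> E != 0 -> (forall u, gfun_slope_ub f u -> c - u <= l) ->
  (c%:E - M2 f <= l%:E)%E.
Proof.
move=> stX E_neq0 lower; apply: ereal_sup_image_lower => [|u ub].
  have [d d_gt0 OmegaE] := Omega_stiefel_nbhd E stX.
  have hd : `|d / 2| < d by rewrite ger0_norm ?divr_ge0 ?ltW //; lra.
  exists (d / 2 *: E + X, X); split => /=; [exact: OmegaE | exact: Omega_stiefel |].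
  by rewrite -subr_eq0 addrK scaler_eq0 negb_or E_neq0 andbT; lra.
by apply: lower => Y1 Y2 OY1 OY2 Y12; apply: (ub (Y1, Y2)).
Qed.

End Omega.

Section StationaryPoint.
Variables (R : realType) (n p : nat).
Local Notation MM := 'M[R]_(n, p).

Variables (f : MM -> R) (beta : R) (X : MM) (L : 'M[R]_p).
Hypotheses (stX : stiefel X) (gradfX : grad f X = X *m L) (symL : L^T = L).
Hypotheses (f_diff : forall Z, differentiable f Z) (gradf_diff : differentiable (grad f) X).

Let gradf_diff_XA : differentiable (grad f) (XAmap X).
Proof. by rewrite XAmap_stiefel. Qed.

Lemma ehess_hfun_tangent E :
  tangent X E -> ehess (hfun f beta) X E = rhess f X E.
Proof.
move=> tE; have skewE := tangent_skew tE.
rewrite ehess_hfun // /dgrad_penalty (gram_defect_stiefel stX) skewE addNr !mulmx0.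
rewrite addr0 scaler0 addr0 /dgrad_gfun /= (XAmap_stiefel stX) (dXAmap_tangent stX tE).
rewrite (dAmap_tangent tE) (Amap_stiefel stX) mulmx1 mulmx0 addr0 gradfX.
have XtXL : X^T *m (X *m L) = L by rewrite mulmxA stX mul1mx.
rewrite /rhess /Ptan gradfX XtXL (Phi_id symL) trmx_mul symL.
set H := ehess f X E; set K := X^T *m E.
have e1 : (E *m (L *m X^T) + X *m H^T) *m X = E *m L + X *m H^T *m X.
  by rewrite mulmxDl -!mulmxA stX mulmx1.
have e2 : X *m (L *m X^T) *m E = X *m L *m K by rewrite -!mulmxA.
have e3 : (E *m X^T + X *m E^T) *m (X *m L) = E *m L - X *m K *m L.
  rewrite mulmxDl; congr (_ + _); first by rewrite -mulmxA (mulmxA X^T) stX mul1mx.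
  by rewrite -mulmxA (mulmxA E^T) skewE mulNmx mulmxN mulmxA.
have e4 : X *m X^T *m H = X *m (X^T *m H) by rewrite -mulmxA.
have e5 : X *m Phi (X^T *m (H - E *m L)) =
   2^-1 *: (X *m (X^T *m H) - X *m K *m L + X *m H^T *m X + X *m L *m K).
  have skewK : K^T = - K by rewrite /K trmx_mul trmxK skewE.
  have -> : X^T *m (H - E *m L) = X^T *m H - K *m L by rewrite mulmxBr mulmxA.
  have trHKL : (X^T *m H - K *m L)^T = H^T *m X + L *m K.
    rewrite linearB /= [(K *m L)^T]trmx_mul skewK symL [(X^T *m H)^T]trmx_mul.
    by rewrite trmxK mulmxN opprK.
  rewrite /Phi trHKL -scalemxAr; congr (_ *: _).
  by rewrite !mulmxDr mulmxN !mulmxA addrA.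
rewrite e1 e2 e3 e4 e5; clear e1 e2 e3 e4 e5; clearbody H K.
move: (X *m (X^T *m H)) (X *m H^T *m X) (X *m L *m K) (X *m K *m L) (E *m L).
by move=> a b c d e; apply/matrixP => i j; rewrite !mxE; lra.
Qed.

Lemma ehess_gfun_normal S : S^T = S ->
  ehess (gfun f) X (X *m S) = X *m (- (3 / 2) *: (L *m S + S *m L)).
Proof.
move=> symS.
have XtXS : X^T *m (X *m S) = S by rewrite mulmxA stX mul1mx.
have trXS : (X *m S)^T = S *m X^T by rewrite trmx_mul symS.
have dA : dAmap X (X *m S) = - S.
  rewrite /dAmap trXS -mulmxA stX mulmx1 XtXS.
  by congr (- _); have := Phi_id symS; rewrite /Phi symS.
have dXA : dXAmap X (X *m S) = 0.
  by rewrite /dXAmap dA (Amap_stiefel stX) mulmx1 mulmxN subrr.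
rewrite ehess_gfun // /dgrad_gfun /= (XAmap_stiefel stX) dXA gradfX.
rewrite [ehess f X 0]linear0.
rewrite trmx_mul symL trXS dA !trmx0 !mulmx0 !mul0mx addr0 add0r addr0 mulmxN.
have e1 : X *m S *m (L *m X^T) *m X = X *m (S *m L).
  by rewrite -!mulmxA stX mulmx1.
have e2 : X *m (L *m X^T) *m (X *m S) = X *m (L *m S).
  by rewrite -!mulmxA (mulmxA X^T) stX mul1mx.
have e3 : (X *m S *m X^T + X *m (S *m X^T)) *m (X *m L) =
          X *m (S *m L) + X *m (S *m L).
  by rewrite mulmxDl -!mulmxA (mulmxA X^T) stX mul1mx.
rewrite e1 e2 e3 -mulmxA -scalemxAr mulmxDr.
move: (X *m (S *m L)) (X *m (L *m S)) => a b.
by apply/matrixP => i j; rewrite !mxE; lra.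
Qed.

Definition hess_normal (S : 'M[R]_p) : 'M[R]_p :=
  - (3 / 2) *: (L *m S + S *m L) + (2 * beta) *: S.

Lemma ehess_hfun_normal S : S^T = S ->
  ehess (hfun f beta) X (X *m S) = X *m hess_normal S.
Proof.
move=> symS; rewrite /hess_normal ehess_hfun // -ehess_gfun // ehess_gfun_normal //.
rewrite /dgrad_penalty (gram_defect_stiefel stX) mulmx0 add0r trmx_mul symS.
rewrite -mulmxA stX mulmx1 mulmxA stX mul1mx [RHS]mulmxDr; congr (_ + _).
by rewrite -scalemxAr mulrC -scalerA scaler_nat mulr2n mulmxDr.
Qed.

Lemma trmx_hess_normal S : S^T = S -> (hess_normal S)^T = hess_normal S.
Proof.
move=> symS; rewrite /hess_normal linearD /= !linearZ /= linearD /= !trmx_mul.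
by rewrite symL symS [S *m L + _]addrC.
Qed.

Lemma ehess_gfun_ge E c : E != 0 -> gfun_slope_ub f c ->
  - c * frob_inner E E <= frob_inner E (ehess (gfun f) X E).
Proof.
move=> E_neq0 slope_ub; have [d d_gt0 OmegaE] := Omega_stiefel_nbhd E stX.
apply: diff_frob_inner_ge d_gt0 _ => [|h h_neq0 small_h].
  by rewrite grad_gfun //; case: (is_diff_grad_gfun gradf_diff_XA).
have hE_gt0 : 0 < frob (h *: E).
  by rewrite lt_def frob_eq0 scaler_eq0 negb_or h_neq0 E_neq0 frob_ge0.
rewrite -ler_pdivrMr //.
have := slope_ub (h *: E + X) X (OmegaE h small_h) (Omega_stiefel stX).
rewrite /gfun_slope addrK; apply.
by rewrite -subr_eq0 addrK scaler_eq0 negb_or h_neq0.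
Qed.

Lemma ehess_hfun_eigen D l : ehess (hfun f beta) X D = l *: D ->
  rhess f X (Ptan X D) = l *: Ptan X D /\
  hess_normal (Phi (X^T *m D)) = l *: Phi (X^T *m D).
Proof.
set S := Phi (X^T *m D); have symS : S^T = S by exact: trmx_Phi.
rewrite {1 2}(Ptan_normal_decomp X D) -/S /ehess linearD /= -/(ehess _ _ _) -/(ehess _ _ _).
rewrite (ehess_hfun_tangent (tangent_Ptan stX D)) (ehess_hfun_normal symS).
rewrite scalerDr => eig.
have eigT : rhess f X (Ptan X D) = l *: Ptan X D.
  have := congr1 (Ptan X) eig.
  rewrite PtanD (Ptan_rhess stX) (Ptan_normal stX (trmx_hess_normal symS)) addr0.
  by rewrite PtanD !PtanZ (Ptan_normal stX symS) (Ptan_id stX) scaler0 addr0.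
split=> //; move: eig; rewrite eigT => /addrI /(congr1 (mulmx X^T)).
by rewrite -scalemxAr !mulmxA stX !mul1mx.
Qed.

Lemma hess_normal_eigen_ge S l c : S != 0 -> S^T = S ->
  hess_normal S = l *: S -> gfun_slope_ub f c -> 2 * beta - c <= l.
Proof.
move=> S_neq0 symS eig slope_ub.
have XtXS : X^T *m (X *m S) = S by rewrite mulmxA stX mul1mx.
have XS_neq0 : X *m S != 0 by apply: contraNneq S_neq0 => XS0; rewrite -XtXS XS0 mulmx0.
have := ehess_gfun_ge XS_neq0 slope_ub.
rewrite ehess_gfun_normal // !frob_inner_mulmxr XtXS.
have := congr1 (frob_inner S) eig; rewrite /hess_normal frob_innerDr !frob_innerZr.
by have := frob_inner_gt0 S_neq0; nra.
Qed.

End StationaryPoint.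

Theorem mainTheorem12 (R : realType) (n p : nat) (f : 'M[R]_(n, p) -> R)
  (beta : R) (X : 'M[R]_(n, p)) :
  (p <= n)%N ->
  0 < beta ->
  (forall Y, differentiable f Y) ->
  loc_lipschitz_R f ->
  loc_lipschitz_M (grad f) ->
  (forall Y, twice_differentiable f Y) ->
  first_order_stationary f X ->
  (forall l : R, rhess_eigenvalue f X l -> ehess_eigenvalue (hfun f beta) X l) /\
  (forall l : R, ehess_eigenvalue (hfun f beta) X l ->
     rhess_eigenvalue f X l \/ ((2 * beta)%:E - M2 f <= l%:E)%E).
Proof.
move=> _ _ f_diff _ _ f_twice [stX stat].
have [_ gradf_diff] := f_twice X.
set L := Phi (X^T *m grad f X) in stat.
have gradfX : grad f X = X *m L by apply/eqP; rewrite -subr_eq0 stat.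
have symL : L^T = L by exact: trmx_Phi.
split=> l.
  case=> D [tD D_neq0 eig]; exists D; split=> //.
  by rewrite (ehess_hfun_tangent beta stX gradfX symL f_diff gradf_diff tD).
case=> D [D_neq0 eig].
have [eigT eigN] := ehess_hfun_eigen stX gradfX symL f_diff gradf_diff eig.
have [Dt0|Dt_neq0] := eqVneq (Ptan X D) 0; last first.
  by left; exists (Ptan X D); split=> //; exact: tangent_Ptan.
right; apply: (M2_lower_bound stX D_neq0) => c slope_ub.
apply: (hess_normal_eigen_ge stX gradfX symL f_diff gradf_diff _ _ eigN slope_ub).
  apply: contraNneq D_neq0 => S0.
  by rewrite (Ptan_normal_decomp X D) Dt0 S0 mulmx0 addr0.
exact: trmx_Phi.
Qed.
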